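(* Let $\mathfrak{g}$ be a complex simple Lie algebra with basis $x_1,\dots,x_m$ and dual basis $x_1^*,\dots,x_m^*$ with respect to the Killing form $B$, and let $V_\lambda$ be a finite-dimensional irreducible $\mathfrak{g}$-module with representation $\pi_\lambda$. For every $z\in Z(\mathfrak{g})$, the element $$M_z(\lambda)=\sum_{i=1}^m\pi_\lambda(x_i^* )\otimes i_{x_i}(z)$$ belongs to $R_\lambda(\mathfrak{g})=(\operatorname{End}V_\lambda\otimes U(\mathfrak{g}))^{\mathfrak{g}}$.
   Context: $Z(\mathfrak{g})$ is the center of the universal enveloping algebra $U(\mathfrak{g})$; $\mathfrak{g}$ acts on $\operatorname{End}V_\lambda$ by commutators and on $U(\mathfrak{g})$ by the adjoint action. For $x\in\mathfrak{g}$, the substitution operator $i_x:U(\mathfrak{g})\to U(\mathfrak{g})$ is defined by $i_x(y)=B(x,y)$ for $y\in\mathfrak{g}$ and $i_x(u_1\cdots u_k)=\sum_{j=1}^k B(x,u_j)\,u_1\cdots u_{j-1}u_{j+1}\cdots u_k$ for $u_1,\dots,u_k\in\mathfrak{g}$.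
   Formalization: The operator $i_x$ is applied by the product formula to the symmetric representative of z in the tensor algebra (coefficients invariant under permuting letters), so $i_x$ is the contraction on S(g) carried to U(g) by symmetrization. The statement above fails without it. *)

From mathcomp Require Import all_boot all_algebra.
From mathcomp Require Import complex.
From mathcomp Require Import Rstruct.
Set Implicit Arguments. Unset Strict Implicit. Unset Printing Implicit Defensive.
Import GRing.Theory Num.Theory.
Local Open Scope ring_scope.

Definition CC : numClosedFieldType := (Rdefinitions.R)[i].

(** * Lie algebra g = CC^m with basis e_0..e_(m-1) and structure constants c:
      [e_i, e_j] = \sum_k c i j k e_k.  Elements of g are row vectors. *)
Section Lie.
Variable m : nat.
Variable c : 'I_m -> 'I_m -> 'I_m -> CC.

Definition bvec (i : 'I_m) : 'rV[CC]_m := delta_mx 0 i.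

Definition lie (u v : 'rV[CC]_m) : 'rV[CC]_m :=
  \row_k \sum_i \sum_j u 0 i * v 0 j * c i j k.

Definition is_lie_algebra : Prop :=
  (forall u, lie u u = 0) /\
  (forall u v w, lie u (lie v w) + lie v (lie w u) + lie w (lie u v) = 0).

(** ideals, given as row spaces of square matrices *)
Definition lie_ideal (I : 'M[CC]_m) : Prop :=
  forall (u v : 'rV[CC]_m), (u <= I)%MS -> (lie v u <= I)%MS.

Definition simple_lie : Prop :=
  is_lie_algebra /\ (exists u v, lie u v != 0) /\
  forall I : 'M[CC]_m, lie_ideal I -> (I == (0 : 'M[CC]_m))%MS \/ (I == 1%:M)%MS.

Definition adm (u : 'rV[CC]_m) : 'M[CC]_m := \matrix_(j, k) (lie u (bvec j)) 0 k.
Definition killing (u v : 'rV[CC]_m) : CC := \tr (adm u *m adm v).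

(** * Representations: pi i = pi(e_i) acting on column vectors CC^n. *)
Definition piv n (pi : 'I_m -> 'M[CC]_n) (u : 'rV[CC]_m) : 'M[CC]_n :=
  \sum_i u 0 i *: pi i.

Definition is_rep n (pi : 'I_m -> 'M[CC]_n) : Prop :=
  forall i j, pi i *m pi j - pi j *m pi i = piv pi (lie (bvec i) (bvec j)).

(** irreducible: nonzero, and the only invariant subspaces of CC^n are 0 and
    CC^n (a subspace is the column space of W^T, i.e. row space of W). *)
Definition irreducible_rep n (pi : 'I_m -> 'M[CC]_n) : Prop :=
  (0 < n)%N /\
  forall W : 'M[CC]_n,
    (forall i, (W *m (pi i)^T <= W)%MS) -> (W == (0 : 'M[CC]_n))%MS \/ (W == 1%:M)%MS.

(** * Tensor algebra T(g): formal finite linear combinations of words in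
      the basis letters.  U(g) = T(g)/I with I the two-sided ideal generated
      by e_i e_j - e_j e_i - [e_i,e_j]. *)
Definition word := seq 'I_m.
Definition tensor := seq (CC * word).

Definition tcoef (t : tensor) (w : word) : CC := \sum_(p <- t | p.2 == w) p.1.
Definition teq (t1 t2 : tensor) : Prop := forall w, tcoef t1 w = tcoef t2 w.
Definition tscale (r : CC) (t : tensor) : tensor := [seq (r * p.1, p.2) | p <- t].
Definition tadd (t1 t2 : tensor) : tensor := t1 ++ t2.
Definition tsub (t1 t2 : tensor) : tensor := t1 ++ tscale (-1) t2.
Definition tmul (t1 t2 : tensor) : tensor :=
  [seq (p.1 * q.1, p.2 ++ q.2) | p <- t1, q <- t2].
Definition tletter (k : 'I_m) : tensor := [:: (1, [:: k])].
Definition tsum (ts : seq tensor) : tensor := flatten ts.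

Definition tgen (a : word) (i j : 'I_m) (b : word) : tensor :=
  [:: (1, a ++ i :: j :: b); (-1, a ++ j :: i :: b)] ++
  [seq (- c i j k, a ++ k :: b) | k <- enum 'I_m].

Definition in_ideal (t : tensor) : Prop :=
  exists s : seq (CC * word * 'I_m * 'I_m * word),
    teq t (tsum [seq tscale x.1.1.1.1 (tgen x.1.1.1.2 x.1.1.2 x.1.2 x.2) | x <- s]).

Definition tad (u : 'rV[CC]_m) (t : tensor) : tensor :=
  tsum [seq tscale (u 0 k) (tsub (tmul (tletter k) t) (tmul t (tletter k)))
       | k <- enum 'I_m].

(** z represents an element of the centre Z(g) of U(g) *)
Definition central (z : tensor) : Prop := forall u, in_ideal (tad u z).

(** z is a symmetric tensor (image of the symmetrisation S(g) -> T(g)) *)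
Definition symmetric_tensor (z : tensor) : Prop :=
  forall w w' : word, perm_eq w w' -> tcoef z w = tcoef z w'.

(** substitution operator: i_x(u_1...u_k) = sum_j B(x,u_j) u_1..^u_j..u_k *)
Definition subst_op (x : 'rV[CC]_m) (t : tensor) : tensor :=
  flatten [seq [seq (p.1 * killing x (bvec jk.2), take jk.1 p.2 ++ drop jk.1.+1 p.2)
               | jk <- zip (iota 0 (size p.2)) p.2] | p <- t].

(** * End V (x) T(g), as n x n matrices of tensors. *)
Definition endten n := 'I_n -> 'I_n -> tensor.

(** action of u in g on End V (x) T(g): [pi(u), A] (x) t + A (x) ad_u t *)
Definition endten_act n (pi : 'I_m -> 'M[CC]_n) (u : 'rV[CC]_m) (M : endten n)
  : endten n := fun a b =>
  tadd (tsum [seq tsub (tscale (piv pi u a d) (M d b)) (tscale (piv pi u d b) (M a d))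
             | d <- enum 'I_n])
       (tad u (M a b)).

(** M (mod End V (x) I) lies in R(g) = (End V (x) U(g))^g *)
Definition in_R n (pi : 'I_m -> 'M[CC]_n) (M : endten n) : Prop :=
  forall u a b, in_ideal (endten_act pi u M a b).

(** M_z = sum_i pi(x_i^* ) (x) i_{x_i}(z), x_i = e_i *)
Definition Mz n (pi : 'I_m -> 'M[CC]_n) (dual : 'I_m -> 'rV[CC]_m) (z : tensor)
  : endten n := fun a b =>
  tsum [seq tscale (piv pi (dual i) a b) (subst_op (bvec i) z) | i <- enum 'I_m].

End Lie.

From Pilot Require Import Defs.
From mathcomp Require Import all_boot all_algebra.
From mathcomp Require Import complex.
From mathcomp Require Import Rstruct.
From mathcomp Require Import ring zify.
Set Implicit Arguments. Unset Strict Implicit. Unset Printing Implicit Defensive.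
Import GRing.Theory Num.Theory.
Local Open Scope ring_scope.

(* Let [D_u] be the derivation of the tensor algebra T(g) extending [ad u].
   Modulo the ideal defining U(g), [ad u] agrees with [D_u], and the
   ad-invariance of the Killing form gives [D_u o i_x = i_[u,x] + i_x o D_u].
   Since [z] is central, [D_u z] is a symmetric tensor lying in the ideal, so it
   vanishes by a PBW-type argument.  Hence the action of [u] on [M_z] is
   [sum_i pi([u, x_i^*]) (x) i_(x_i) z + pi(x_i^* ) (x) i_([u, x_i]) z] modulo the
   ideal, which is zero because the Casimir tensor [sum_i x_i^* (x) x_i] is
   ad-invariant. *)

Lemma sum_enum_ord (V : nmodType) (k : nat) (F : 'I_k -> V) :
  \sum_(l <- enum 'I_k) F l = \sum_l F l.
Proof. by rewrite big_enum. Qed.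

Section TensorFunctionals.
Variable m : nat.
Local Notation word := (word m).
Local Notation tensor := (tensor m).

Definition tlin (F : word -> CC) (t : tensor) : CC := \sum_(p <- t) p.1 * F p.2.

Definition tbind (f : word -> tensor) (t : tensor) : tensor :=
  flatten [seq tscale p.1 (f p.2) | p <- t].

Definition tcons (a : 'I_m) (t : tensor) : tensor := [seq (p.1, a :: p.2) | p <- t].

Lemma tlin_nil F : tlin F [::] = 0.
Proof. by rewrite /tlin big_nil. Qed.

Lemma tlin_cons F p t : tlin F (p :: t) = p.1 * F p.2 + tlin F t.
Proof. by rewrite /tlin big_cons. Qed.

Lemma tlin_cat F t1 t2 : tlin F (t1 ++ t2) = tlin F t1 + tlin F t2.
Proof. by rewrite /tlin big_cat. Qed.

Lemma tlin_unit F v : tlin F [:: (1, v)] = F v.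
Proof. by rewrite tlin_cons tlin_nil mul1r addr0. Qed.

Lemma tlin_tscale F r t : tlin F (tscale r t) = r * tlin F t.
Proof.
by rewrite /tlin big_map mulr_sumr; apply: eq_bigr => p _; rewrite mulrA.
Qed.

Lemma tlin_flatten F ts : tlin F (flatten ts) = \sum_(t <- ts) tlin F t.
Proof.
by elim: ts => [|t ts IH]; rewrite ?big_nil ?tlin_nil //= tlin_cat big_cons IH.
Qed.

Lemma tlin_tbind F f t : tlin F (tbind f t) = tlin (fun v => tlin F (f v)) t.
Proof.
rewrite tlin_flatten big_map; apply: eq_bigr => p _.
by rewrite tlin_tscale.
Qed.

Lemma tlin_tcons F a t : tlin F (tcons a t) = tlin (fun v => F (a :: v)) t.
Proof. by rewrite /tlin big_map. Qed.

Lemma tlin_tmul F t1 t2 :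
  tlin F (tmul t1 t2) = tlin (fun v1 => tlin (fun v2 => F (v1 ++ v2)) t2) t1.
Proof.
rewrite /tmul /tlin big_allpairs_dep; apply: eq_bigr => p _.
by rewrite mulr_sumr; apply: eq_bigr => q _; rewrite mulrA.
Qed.

Lemma eq_tlin F G t : F =1 G -> tlin F t = tlin G t.
Proof. by move=> FG; apply: eq_bigr => p _; rewrite FG. Qed.

Lemma tlinfD F G t : tlin (fun v => F v + G v) t = tlin F t + tlin G t.
Proof. by rewrite /tlin -big_split; apply: eq_bigr => p _; rewrite mulrDr. Qed.

Lemma tlinfZ r F t : tlin (fun v => r * F v) t = r * tlin F t.
Proof. by rewrite /tlin mulr_sumr; apply: eq_bigr => p _; rewrite mulrCA. Qed.

Lemma tlinfB F G t : tlin (fun v => F v - G v) t = tlin F t - tlin G t.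
Proof. by rewrite /tlin -sumrB; apply: eq_bigr => p _; rewrite mulrBr. Qed.

Lemma tlinf_sum (I : Type) (r : seq I) (H : I -> word -> CC) t :
  tlin (fun v => \sum_(i <- r) H i v) t = \sum_(i <- r) tlin (H i) t.
Proof. by rewrite /tlin exchange_big; apply: eq_bigr => p _; rewrite mulr_sumr. Qed.

Lemma tlinf0 t : tlin (fun _ => 0) t = 0.
Proof. by rewrite /tlin big1 // => p _; rewrite mulr0. Qed.

Lemma tcoef_tlin t w : tcoef t w = tlin (fun v => (v == w)%:R) t.
Proof.
rewrite /tcoef /tlin big_mkcond; apply: eq_bigr => p _.
by case: eqP; rewrite ?mulr1 ?mulr0.
Qed.

Lemma tlin_support F t (S : seq word) :
  uniq S -> {subset [seq p.2 | p <- t] <= S} ->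
  tlin F t = \sum_(w <- S) tcoef t w * F w.
Proof.
move=> uS; elim: t => [|p t IH] sub.
  by rewrite tlin_nil big1 // => w _; rewrite /tcoef big_nil mul0r.
rewrite tlin_cons IH; last by move=> x xt; apply: sub; rewrite inE xt orbT.
have pS : p.2 \in S by apply: sub; rewrite inE eqxx.
rewrite [RHS](eq_bigr (fun w => (p.2 == w)%:R * p.1 * F w + tcoef t w * F w)); last first.
  by move=> w _; rewrite /tcoef big_cons; case: eqP; rewrite ?mul1r ?mul0r ?add0r ?mulrDl.
rewrite big_split /=; congr (_ + _).
rewrite (bigD1_seq p.2) //= eqxx mul1r big1 ?addr0 // => w /negbTE.
by rewrite eq_sym => ->; rewrite !mul0r.
Qed.

Lemma eq_tlin_tcoef F G t :
  (forall w, tcoef t w * F w = tcoef t w * G w) -> tlin F t = tlin G t.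
Proof.
move=> FG; have supp : {subset [seq p.2 | p <- t] <= undup [seq p.2 | p <- t]}.
  by move=> x; rewrite mem_undup.
rewrite !(tlin_support _ (undup_uniq _) supp).
by apply: eq_bigr => w _; rewrite FG.
Qed.

Lemma tlin_eq0 F t : (forall w, tcoef t w = 0) -> tlin F t = 0.
Proof.
move=> t0; rewrite (@eq_tlin_tcoef F (fun _ => 0)) ?tlinf0 // => w.
by rewrite t0 !mul0r.
Qed.

Lemma tlin_teq F t1 t2 : teq t1 t2 -> tlin F t1 = tlin F t2.
Proof.
move=> t12; set S := undup [seq p.2 | p <- t1 ++ t2].
rewrite !(@tlin_support F _ S) ?undup_uniq //.
- by apply: eq_bigr => w _; rewrite t12.
- by move=> x xt; rewrite mem_undup map_cat mem_cat xt orbT.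
- by move=> x xt; rewrite mem_undup map_cat mem_cat xt.
Qed.

Lemma teq_tlin t1 t2 : (forall F, tlin F t1 = tlin F t2) -> teq t1 t2.
Proof. by move=> t12 w; rewrite !tcoef_tlin t12. Qed.

End TensorFunctionals.

Section Ideal.
Variable m : nat.
Variable c : 'I_m -> 'I_m -> 'I_m -> CC.
Local Notation word := (word m).
Local Notation tensor := (tensor m).

Definition tgen_comb (s : seq (CC * word * 'I_m * 'I_m * word)) : tensor :=
  tsum [seq tscale x.1.1.1.1 (tgen c x.1.1.1.2 x.1.1.2 x.1.2 x.2) | x <- s].

Lemma tlin_tgen_comb F s : tlin F (tgen_comb s) =
  \sum_(x <- s) x.1.1.1.1 * tlin F (tgen c x.1.1.1.2 x.1.1.2 x.1.2 x.2).
Proof.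
rewrite tlin_flatten big_map; apply: eq_bigr => x _.
by rewrite tlin_tscale.
Qed.

Lemma tlin_tgen F a i j b : tlin F (tgen c a i j b) =
  F (a ++ i :: j :: b) - F (a ++ j :: i :: b)
  - \sum_(k <- enum 'I_m) c i j k * F (a ++ k :: b).
Proof.
rewrite tlin_cat !tlin_cons tlin_nil /tlin big_map /= mul1r mulN1r addr0 -sumrN.
by congr (_ + _); apply: eq_bigr => k _; rewrite mulNr.
Qed.

Lemma in_ideal_teq t1 t2 : teq t1 t2 -> in_ideal c t2 -> in_ideal c t1.
Proof. by move=> t12 [s t2s]; exists s => w; rewrite t12 t2s. Qed.

Lemma in_ideal0 t : (forall w, tcoef t w = 0) -> in_ideal c t.
Proof. by move=> t0; exists [::] => w; rewrite t0 /tcoef big_nil. Qed.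

Lemma in_ideal_cat t1 t2 : in_ideal c t1 -> in_ideal c t2 -> in_ideal c (t1 ++ t2).
Proof.
move=> [s1 t1s] [s2 t2s]; exists (s1 ++ s2); apply: teq_tlin => F.
rewrite tlin_cat (tlin_teq F t1s) (tlin_teq F t2s).
by rewrite -[tsum _]/(tgen_comb _) !tlin_tgen_comb big_cat.
Qed.

Lemma in_ideal_tscale r t : in_ideal c t -> in_ideal c (tscale r t).
Proof.
move=> [s ts]; exists [seq (r * x.1.1.1.1, x.1.1.1.2, x.1.1.2, x.1.2, x.2) | x <- s].
apply: teq_tlin => F; rewrite tlin_tscale (tlin_teq F ts).
rewrite -[tsum _]/(tgen_comb _) !tlin_tgen_comb big_map mulr_sumr.
by apply: eq_bigr => x _; rewrite mulrA.
Qed.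

Lemma in_ideal_tcons a t : in_ideal c t -> in_ideal c (tcons a t).
Proof.
move=> [s ts]; exists [seq (x.1.1.1.1, a :: x.1.1.1.2, x.1.1.2, x.1.2, x.2) | x <- s].
apply: teq_tlin => F; rewrite tlin_tcons (tlin_teq _ ts).
rewrite -[tsum [seq _ | _ <- s]]/(tgen_comb _) -[tsum _]/(tgen_comb _).
by rewrite !tlin_tgen_comb big_map; apply: eq_bigr => x _; rewrite !tlin_tgen.
Qed.

Lemma in_ideal_tsum ts : (forall t, t \in ts -> in_ideal c t) -> in_ideal c (tsum ts).
Proof.
elim: ts => [|t ts IH] tsI; first by apply: in_ideal0 => w; rewrite /tcoef big_nil.
apply: in_ideal_cat; first by apply: tsI; rewrite inE eqxx.
by apply: IH => x xts; apply: tsI; rewrite inE xts orbT.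
Qed.

Lemma in_ideal_tbind f t : (forall v, in_ideal c (f v)) -> in_ideal c (tbind f t).
Proof.
move=> fI; apply: in_ideal_tsum => _ /mapP [p _ ->].
exact: in_ideal_tscale.
Qed.

Lemma in_ideal_tgen a i j b : in_ideal c (tgen c a i j b).
Proof.
exists [:: (1, a, i, j, b)]; apply: teq_tlin => F.
by rewrite -[tsum _]/(tgen_comb _) tlin_tgen_comb big_seq1 mul1r.
Qed.

Lemma tlin_in_ideal F t : (forall a i j b, tlin F (tgen c a i j b) = 0) ->
  in_ideal c t -> tlin F t = 0.
Proof.
move=> F0 [s ts]; rewrite (tlin_teq F ts) -[tsum _]/(tgen_comb _) tlin_tgen_comb.
by rewrite big1 // => x _; rewrite F0 mulr0.
Qed.

End Ideal.

Section LieAlgebra.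
Variable m : nat.
Variable c : 'I_m -> 'I_m -> 'I_m -> CC.
Hypothesis lieL : is_lie_algebra c.

Local Notation lie := (lie c).
Local Notation adm := (adm c).
Local Notation killing := (killing c).

Lemma bvecE (i j : 'I_m) : bvec i 0 j = (i == j)%:R.
Proof. by rewrite mxE eqxx eq_sym. Qed.

Lemma row_bvec_expand (u : 'rV[CC]_m) : u = \sum_i u 0 i *: bvec i.
Proof.
apply/rowP => k; rewrite summxE (bigD1 k) //= big1 ?addr0 => [|i ik].
  by rewrite !mxE !eqxx mulr1.
by rewrite !mxE eqxx eq_sym (negbTE ik) mulr0.
Qed.

Lemma lieE u v k : lie u v 0 k = \sum_i \sum_j u 0 i * v 0 j * c i j k.
Proof. exact: mxE. Qed.

Lemma lie_bvecr u a k : lie u (bvec a) 0 k = \sum_i u 0 i * c i a k.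
Proof.
rewrite lieE; apply: eq_bigr => i _.
rewrite (bigD1 a) //= bvecE eqxx mulr1 big1 ?addr0 // => j /negbTE ja.
by rewrite bvecE eq_sym ja mulr0 mul0r.
Qed.

Lemma lie_bvec i j k : lie (bvec i) (bvec j) 0 k = c i j k.
Proof.
rewrite lie_bvecr (bigD1 i) //= bvecE eqxx mul1r big1 ?addr0 // => l /negbTE li.
by rewrite bvecE eq_sym li mul0r.
Qed.

Lemma admE u j k : adm u j k = \sum_i u 0 i * c i j k.
Proof. by rewrite mxE lie_bvecr. Qed.

Lemma mul_adm v u : v *m adm u = lie u v.
Proof.
apply/rowP => k; rewrite !mxE exchange_big; apply: eq_bigr => j _.
rewrite admE mulr_sumr; apply: eq_bigr => i _.
by rewrite mulrCA mulrA.
Qed.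

Lemma admD u v : adm (u + v) = adm u + adm v.
Proof.
apply/matrixP => j k; rewrite [LHS]admE mxE !admE -big_split.
by apply: eq_bigr => i _; rewrite mxE mulrDl.
Qed.

Lemma admZ r u : adm (r *: u) = r *: adm u.
Proof.
apply/matrixP => j k; rewrite [LHS]admE mxE !admE mulr_sumr.
by apply: eq_bigr => i _; rewrite mxE mulrA.
Qed.

Lemma adm_sum (I : Type) (r : seq I) (F : I -> 'rV[CC]_m) :
  adm (\sum_(i <- r) F i) = \sum_(i <- r) adm (F i).
Proof.
have adm0 : adm 0 = 0 by rewrite -(scale0r 0) admZ scale0r.
exact: (big_morph _ admD adm0).
Qed.

Lemma lieDl u v w : lie (u + v) w = lie u w + lie v w.
Proof. by rewrite -!mul_adm admD mulmxDr. Qed.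

Lemma lieDr u v w : lie u (v + w) = lie u v + lie u w.
Proof. by rewrite -!mul_adm mulmxDl. Qed.

Lemma lieNr u v : lie u (- v) = - lie u v.
Proof. by rewrite -!mul_adm mulNmx. Qed.

Lemma lieC u v : lie u v = - lie v u.
Proof.
have := lieL.1 (u + v); rewrite lieDl !lieDr !lieL.1 add0r addr0.
by move/eqP; rewrite addr_eq0 => /eqP.
Qed.

Lemma lie_lie u x w : lie (lie u x) w = lie u (lie x w) - lie x (lie u w).
Proof.
have J := lieL.2 u x w.
rewrite (lieC (lie u x) w).
have -> : lie w (lie u x) = - (lie u (lie x w) + lie x (lie w u)).
  by apply/eqP; rewrite -addr_eq0 addrC J.
by rewrite opprK (lieC w u) lieNr.
Qed.

Lemma adm_lie u x : adm (lie u x) = adm x *m adm u - adm u *m adm x.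
Proof.
apply/row_matrixP => j.
by rewrite !rowE -/(bvec j) mulmxBr !mulmxA !mul_adm lie_lie.
Qed.

Lemma killingC x y : killing x y = killing y x.
Proof. exact: mxtrace_mulC. Qed.

Lemma killingDr x y z : killing x (y + z) = killing x y + killing x z.
Proof. by rewrite /Defs.killing admD mulmxDr mxtraceD. Qed.

Lemma killingZr x r y : killing x (r *: y) = r * killing x y.
Proof. by rewrite /Defs.killing admZ -scalemxAr mxtraceZ. Qed.

Lemma killing_sumr x (I : Type) (r : seq I) (F : I -> 'rV[CC]_m) :
  killing x (\sum_(i <- r) F i) = \sum_(i <- r) killing x (F i).
Proof.
have killing0r : killing x 0 = 0 by rewrite -(scale0r 0) killingZr mul0r.
exact: (big_morph _ (killingDr x) killing0r).
Qed.

Lemma killing_bvecr x y : killing x y = \sum_i y 0 i * killing x (bvec i).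
Proof.
rewrite {1}(row_bvec_expand y) killing_sumr.
by apply: eq_bigr => i _; rewrite killingZr.
Qed.

Lemma killing_bvecl x y : killing x y = \sum_i x 0 i * killing (bvec i) y.
Proof.
by rewrite killingC killing_bvecr; apply: eq_bigr => i _; rewrite killingC.
Qed.

Lemma killing_lie_invariant u x y : killing (lie u x) y + killing x (lie u y) = 0.
Proof.
rewrite /Defs.killing !adm_lie mulmxBl mulmxBr !raddfB /= -!mulmxA.
rewrite [\tr (adm x *m (adm y *m adm u))]mxtrace_mulC -!mulmxA.
rewrite [\tr (adm y *m (adm u *m adm x))]mxtrace_mulC -mulmxA.
by rewrite addrC addrA addrNK subrr.
Qed.

End LieAlgebra.

Section Derivation.
Variable m : nat.
Variable c : 'I_m -> 'I_m -> 'I_m -> CC.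
Hypothesis lieL : is_lie_algebra c.
Local Notation word := (word m).
Local Notation tensor := (tensor m).

Definition ad_coef (u : 'rV[CC]_m) (a l : 'I_m) : CC := lie c u (bvec a) 0 l.

Fixpoint der_word (u : 'rV[CC]_m) (v : word) : tensor :=
  if v is a :: v' then
    [seq (ad_coef u a l, l :: v') | l <- enum 'I_m] ++ tcons a (der_word u v')
  else [::].

Definition tder u (t : tensor) : tensor := tbind (der_word u) t.

Definition subst_word (x : 'rV[CC]_m) (v : word) : tensor :=
  [seq (killing c x (bvec jk.2), take jk.1 v ++ drop jk.1.+1 v)
  | jk <- zip (iota 0 (size v)) v].

Lemma subst_opE x t : subst_op c x t = tbind (subst_word x) t.
Proof.
rewrite /subst_op /tbind /tscale /subst_word; congr flatten.
by apply: eq_map => p; rewrite -map_comp.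
Qed.

Lemma tlin_der_word_cons F u a v : tlin F (der_word u (a :: v)) =
  \sum_(l <- enum 'I_m) ad_coef u a l * F (l :: v)
  + tlin (fun w => F (a :: w)) (der_word u v).
Proof. by rewrite /= tlin_cat tlin_tcons /tlin big_map. Qed.

Lemma subst_word_cons x a v :
  subst_word x (a :: v) = (killing c x (bvec a), v) :: tcons a (subst_word x v).
Proof.
have zip_iotaS k (w : word) : zip (iota k.+1 (size w)) w =
    [seq (jk.1.+1, jk.2) | jk <- zip (iota k (size w)) w].
  by elim: w k => [|b w IH] k //=; rewrite IH.
by rewrite /subst_word /= drop0 zip_iotaS /tcons -!map_comp.
Qed.

Lemma tlin_subst_word_cons F x a v : tlin F (subst_word x (a :: v)) =
  killing c x (bvec a) * F v + tlin (fun w => F (a :: w)) (subst_word x v).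
Proof. by rewrite subst_word_cons tlin_cons tlin_tcons. Qed.

Lemma tlin_subst_word F x v :
  tlin F (subst_word x v) = \sum_j x 0 j * tlin F (subst_word (bvec j) v).
Proof.
elim: v F => [|a v IH] F.
  by rewrite /subst_word /= tlin_nil big1 // => j _; rewrite mulr0.
rewrite tlin_subst_word_cons IH (killing_bvecl c) mulr_suml -big_split /=.
by apply: eq_bigr => j _; rewrite tlin_subst_word_cons mulrDr mulrA.
Qed.

Lemma tlin_subst_op F x t :
  tlin F (subst_op c x t) = \sum_j x 0 j * tlin F (subst_op c (bvec j) t).
Proof.
rewrite subst_opE tlin_tbind (eq_tlin _ (fun v => tlin_subst_word F x v)) tlinf_sum.
by apply: eq_bigr => j _; rewrite tlinfZ subst_opE tlin_tbind.
Qed.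

Lemma sum_ad_coef_killing u x a :
  \sum_(l <- enum 'I_m) ad_coef u a l * killing c x (bvec l) =
  - killing c (lie c u x) (bvec a).
Proof.
apply/eqP; rewrite sum_enum_ord -addr_eq0 addrC -killing_bvecr.
by rewrite (killing_lie_invariant lieL).
Qed.

(* This is where the ad-invariance of the Killing form enters. *)
Lemma tder_subst_word F u x v :
  tlin F (tder u (subst_word x v)) =
  tlin F (subst_word (lie c u x) v) + tlin F (tbind (subst_word x) (der_word u v)).
Proof.
elim: v F => [|a v IH] F; first by rewrite /tder /tbind /= !tlin_nil addr0.
set Fa := fun w => F (a :: w); have IHa := IH Fa.
rewrite /tder !tlin_tbind !tlin_subst_word_cons tlin_der_word_cons.
have der_head : tlin (fun w => tlin F (der_word u (a :: w))) (subst_word x v) =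
    \sum_(l <- enum 'I_m) ad_coef u a l * tlin (fun w => F (l :: w)) (subst_word x v)
    + tlin Fa (tder u (subst_word x v)).
  rewrite (eq_tlin _ (fun w => tlin_der_word_cons F u a w)) tlinfD tlinf_sum.
  by rewrite /tder tlin_tbind; congr (_ + _); apply: eq_bigr => l _; rewrite tlinfZ.
have subst_head : tlin (fun w => tlin F (subst_word x (a :: w))) (der_word u v) =
    killing c x (bvec a) * tlin F (der_word u v)
    + tlin Fa (tbind (subst_word x) (der_word u v)).
  by rewrite (eq_tlin _ (fun w => tlin_subst_word_cons F x a w)) tlinfD tlinfZ tlin_tbind.
have invariance : \sum_(l <- enum 'I_m) ad_coef u a l * tlin F (subst_word x (l :: v)) =
    - killing c (lie c u x) (bvec a) * F v
    + \sum_(l <- enum 'I_m) ad_coef u a l * tlin (fun w => F (l :: w)) (subst_word x v).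
  rewrite -sum_ad_coef_killing mulr_suml -big_split; apply: eq_bigr => l _.
  by rewrite tlin_subst_word_cons mulrDr mulrA.
rewrite der_head subst_head invariance IHa.
ring.
Qed.

Lemma tlin_tder_subst_op F u x t : (forall w, tcoef (tder u t) w = 0) ->
  tlin F (tder u (subst_op c x t)) = tlin F (subst_op c (lie c u x) t).
Proof.
move=> Dt0; rewrite !subst_opE /tder !tlin_tbind.
under eq_tlin => v do rewrite -(tlin_tbind F (der_word u)) tder_subst_word.
rewrite tlinfD -[RHS]addr0; congr (_ + _).
under eq_tlin => v do rewrite tlin_tbind.
by rewrite -(tlin_tbind _ (der_word u)) tlin_eq0.
Qed.

Lemma tlin_tad F u t : tlin F (tad u t) =
  tlin (fun v => \sum_(k <- enum 'I_m) u 0 k * (F (k :: v) - F (v ++ [:: k]))) t.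
Proof.
rewrite tlin_flatten big_map tlinf_sum; apply: eq_bigr => k _.
rewrite tlin_tscale tlin_cat tlin_tscale !tlin_tmul tlin_unit tlinfZ.
by rewrite (eq_tlin _ (fun v => tlin_unit (fun w => F (v ++ w)) [:: k])) tlinfB mulN1r.
Qed.

(* Moving the letter [e_k] across the word one step at a time costs exactly
   the generators [e_k e_a - e_a e_k - [e_k, e_a]]. *)
Lemma in_ideal_tad_der_word u v :
  in_ideal c (tad u [:: (1, v)] ++ tscale (-1) (der_word u v)).
Proof.
elim: v => [|a v IH].
  apply: in_ideal0 => w; rewrite tcoef_tlin tlin_cat tlin_tscale tlin_tad tlin_unit.
  by rewrite tlin_nil mulr0 addr0 big1 // => k _; rewrite subrr mulr0.
set R := fun v => tad u [:: (1, v)] ++ tscale (-1) (der_word u v).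
set gens := tsum [seq tscale (u 0 k) (tgen c [::] k a v) | k <- enum 'I_m].
apply: (@in_ideal_teq _ _ _ (gens ++ tcons a (R v))); last first.
  apply: in_ideal_cat; last exact: in_ideal_tcons.
  apply: in_ideal_tsum => _ /mapP [k _ ->].
  exact/in_ideal_tscale/in_ideal_tgen.
apply: teq_tlin => F.
have tlinR w F' : tlin F' (R w) = \sum_(k <- enum 'I_m) u 0 k * (F' (k :: w) - F' (w ++ [:: k]))
    - tlin F' (der_word u w).
  by rewrite tlin_cat tlin_tscale tlin_tad tlin_unit mulN1r.
have tlin_gens : tlin F gens = \sum_k u 0 k *
    (F (k :: a :: v) - F (a :: k :: v) - \sum_l c k a l * F (l :: v)).
  rewrite tlin_flatten big_map sum_enum_ord; apply: eq_bigr => k _.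
  by rewrite tlin_tscale tlin_tgen sum_enum_ord.
have ad_coef_expand : \sum_l ad_coef u a l * F (l :: v) =
    \sum_k u 0 k * \sum_l c k a l * F (l :: v).
  under eq_bigr do rewrite /ad_coef lie_bvecr mulr_suml.
  rewrite exchange_big; apply: eq_bigr => k _; rewrite mulr_sumr.
  by apply: eq_bigr => l _; rewrite mulrA.
rewrite -/(R (a :: v)) tlin_cat tlin_gens tlin_tcons !tlinR tlin_der_word_cons /=.
rewrite !sum_enum_ord ad_coef_expand.
have sum_mulrBr (f g h : 'I_m -> CC) :
    \sum_k f k * (g k - h k) = \sum_k f k * g k - \sum_k f k * h k.
  by rewrite -sumrB; apply: eq_bigr => k _; rewrite mulrBr.
rewrite !sum_mulrBr; ring.
Qed.

Lemma in_ideal_tad_tder u t : in_ideal c (tad u t ++ tscale (-1) (tder u t)).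
Proof.
apply: (@in_ideal_teq _ _ _ (tbind (fun v => tad u [:: (1, v)] ++ tscale (-1) (der_word u v)) t)).
  apply: teq_tlin => F; rewrite tlin_cat tlin_tscale tlin_tad /tder !tlin_tbind.
  under [RHS]eq_tlin => v do rewrite tlin_cat tlin_tscale tlin_tad tlin_unit.
  by rewrite -tlinfZ -tlinfD.
exact/in_ideal_tbind/in_ideal_tad_der_word.
Qed.

Lemma in_ideal_tder u t : in_ideal c (tad u t) -> in_ideal c (tder u t).
Proof.
move=> adI; apply: (@in_ideal_teq _ _ _
  (tad u t ++ tscale (-1) (tad u t ++ tscale (-1) (tder u t)))).
  by apply: teq_tlin => F; rewrite !(tlin_cat, tlin_tscale); ring.
exact/(in_ideal_cat adI)/in_ideal_tscale/in_ideal_tad_tder.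
Qed.

Section Symmetric.
Variable x0 : 'I_m.

Lemma tlin_der_word F u v : tlin F (der_word u v) =
  \sum_(0 <= p < size v) \sum_(l <- enum 'I_m)
    ad_coef u (nth x0 v p) l * F (set_nth x0 v p l).
Proof.
elim: v F => [|a v IH] F; first by rewrite tlin_nil big_geq.
by rewrite tlin_der_word_cons IH /= big_nat_recl.
Qed.

Lemma set_nth_swap (v w : word) p : size v = size w -> (p < size v)%N ->
  (set_nth x0 v p (nth x0 w p) == w) = (v == set_nth x0 w p (nth x0 v p)).
Proof.
move=> vw pv; apply/eqP/eqP => e; apply: (@eq_from_nth _ x0) => [|i _].
- by rewrite size_set_nth vw; apply/esym/maxn_idPr; rewrite -vw.
- rewrite nth_set_nth /=; case: eqP => [->//|/eqP ne].
  by rewrite -e nth_set_nth /= (negbTE ne).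
- by rewrite size_set_nth vw; apply/maxn_idPr; rewrite -vw.
- rewrite nth_set_nth /=; case: eqP => [->//|/eqP ne].
  by rewrite e nth_set_nth /= (negbTE ne).
Qed.

Lemma sum_set_nth_transpose u (v w : word) :
  \sum_(0 <= p < size v) \sum_(l <- enum 'I_m)
     ad_coef u (nth x0 v p) l * (set_nth x0 v p l == w)%:R =
  \sum_(0 <= p < size w) \sum_(k <- enum 'I_m)
     ad_coef u k (nth x0 w p) * (v == set_nth x0 w p k)%:R.
Proof.
have [vw|vw] := eqVneq (size v) (size w); last first.
  have set_nth_neq (r s : word) q l : size r != size s -> (q < size r)%N ->
      (set_nth x0 r q l == s) = false.
    move=> rs qr; apply/eqP => e; move: rs.
    by rewrite -e size_set_nth (maxn_idPr qr) eqxx.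
  rewrite !big_nat !big1 // => p /andP[_ ps]; rewrite big1 // => l _.
    by rewrite eq_sym set_nth_neq 1?eq_sym // mulr0.
  by rewrite set_nth_neq // mulr0.
rewrite -vw; apply: eq_big_nat => p /andP[_ pv]; rewrite !sum_enum_ord.
rewrite (bigD1 (nth x0 w p)) // [RHS](bigD1 (nth x0 v p)) //= set_nth_swap //.
rewrite !big1 ?addr0 // => l ne; case: eqP => [e|]; rewrite ?mulr0 //; move: ne.
  by rewrite e nth_set_nth /= eqxx eqxx.
by rewrite -e nth_set_nth /= eqxx eqxx.
Qed.

Lemma tcoef_tder u t w : tcoef (tder u t) w =
  \sum_(0 <= p < size w) \sum_(k <- enum 'I_m)
     ad_coef u k (nth x0 w p) * tcoef t (set_nth x0 w p k).
Proof.
rewrite tcoef_tlin /tder tlin_tbind (eq_tlin _ (fun v => tlin_der_word _ u v)).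
rewrite (eq_tlin _ (fun v => sum_set_nth_transpose u v w)) tlinf_sum.
apply: eq_bigr => p _; rewrite tlinf_sum; apply: eq_bigr => k _.
by rewrite tlinfZ tcoef_tlin.
Qed.

Lemma set_nth_map_nth (w : word) (s : seq nat) p k : uniq s ->
  (p < size s)%N -> {subset s <= gtn (size w)} ->
  set_nth x0 [seq nth x0 w i | i <- s] p k =
  [seq nth x0 (set_nth x0 w (nth 0%N s p) k) i | i <- s].
Proof.
move=> us ps sw; apply: (@eq_from_nth _ x0) => [|i].
  by rewrite size_set_nth !size_map; apply/maxn_idPr.
rewrite size_set_nth size_map (maxn_idPr ps) => ilt.
by rewrite nth_set_nth /= !(nth_map 0%N) // nth_set_nth /= nth_uniq.
Qed.

Lemma symmetric_tder u t : symmetric_tensor t -> symmetric_tensor (tder u t).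
Proof.
move=> symt w w' /(perm_iotaP x0) [s perm_s ->]; rewrite !tcoef_tder size_map.
set n := size w'.
have size_s : size s = n by rewrite (perm_size perm_s) size_iota.
have uniq_s : uniq s by rewrite (perm_uniq perm_s) iota_uniq.
have s_lt : {subset s <= gtn n} by move=> q; rewrite (perm_mem perm_s) mem_iota.
set H := fun q => \sum_(k <- enum 'I_m)
  ad_coef u k (nth x0 w' q) * tcoef t (set_nth x0 w' q k).
transitivity (\sum_(0 <= p < n) H (nth 0%N s p)).
  rewrite size_s; apply: eq_big_nat => p /andP[_ pn]; apply: eq_bigr => k _.
  have ps : (p < size s)%N by rewrite size_s.
  rewrite (nth_map 0%N) // set_nth_map_nth //; congr (_ * _); apply: symt.
  apply/(perm_iotaP x0); exists s => //.
  by rewrite size_set_nth (maxn_idPr (s_lt _ (mem_nth 0%N ps))).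
rewrite -(big_map (nth 0%N s) xpredT H).
have -> : [seq nth 0%N s p | p <- index_iota 0 n] = s.
  by rewrite /index_iota subn0 -size_s; exact: mkseq_nth.
by rewrite /index_iota subn0; apply: perm_big.
Qed.

End Symmetric.

End Derivation.

Section SymmetricPBW.
Variable m : nat.
Variable c : 'I_m -> 'I_m -> 'I_m -> CC.
Hypothesis lieL : is_lie_algebra c.
Variable dual : 'I_m -> 'rV[CC]_m.
Hypothesis dualP : forall i j : 'I_m, killing c (bvec i) (dual j) = (i == j)%:R.
Variable x0 : 'I_m.
Local Notation word := (word m).
Local Notation tensor := (tensor m).
Local Notation mx := 'M[CC]_(m + 1).

(* The trivial summand of [g (+) CC] is there only to make [dual_coord j 1]
   vanish; on [ad_block a] the form [dual_coord j] computes [B(x_j^*, e_a)]. *)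
Definition ad_block (a : 'I_m) : mx := block_mx (adm c (bvec a)) 0 0 0.

Definition dual_coord (j : 'I_m) (M : mx) : CC :=
  \tr (block_mx (adm c (dual j)) 0 0 (- \tr (adm c (dual j)))%:M *m M).

Lemma dual_coord1 j : dual_coord j 1%:M = 0.
Proof. by rewrite /dual_coord mulmx1 mxtrace_block mxtrace_scalar subrr. Qed.

Lemma dual_coord_ad_block j a : dual_coord j (ad_block a) = (a == j)%:R.
Proof.
rewrite /dual_coord mulmx_block mxtrace_block !mulmx0 !addr0 mxtrace0 addr0.
by rewrite -/(killing c (dual j) (bvec a)) killingC dualP.
Qed.

Lemma dual_coordD j M N : dual_coord j (M + N) = dual_coord j M + dual_coord j N.
Proof. by rewrite /dual_coord mulmxDr mxtraceD. Qed.

Lemma dual_coordZ j r M : dual_coord j (r *: M) = r * dual_coord j M.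
Proof. by rewrite /dual_coord -scalemxAr mxtraceZ. Qed.

Lemma ad_block_lie i j :
  ad_block j *m ad_block i - ad_block i *m ad_block j =
  \sum_(k <- enum 'I_m) c i j k *: ad_block k.
Proof.
pose ext (M : 'M[CC]_m) : mx := block_mx M 0 0 0.
have extD : {morph ext : M N / M + N} by move=> M N; rewrite /ext add_block_mx !addr0.
have ext0 : ext 0 = 0 by rewrite /ext block_mx0.
have extZ r : {morph ext : M / r *: M} by move=> M; rewrite /ext scale_block_mx !scaler0.
have extM M N : ext M *m ext N = ext (M *m N).
  by rewrite /ext mulmx_block !mulmx0 !mul0mx !addr0.
rewrite !extM -scaleN1r -extZ -extD scaleN1r -(adm_lie lieL).
rewrite {1}(row_bvec_expand (lie c _ _)) adm_sum (big_morph ext extD ext0) sum_enum_ord.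
by apply: eq_bigr => k _; rewrite admZ extZ lie_bvec.
Qed.

Section Slots.
Variable d : nat.
Variable th : 'I_d -> 'I_m.
Local Notation state := ('I_d -> mx).

Definition set_slot (st : state) (s : 'I_d) (M : mx) : state :=
  fun t => if t == s then M else st t.

(* [slot_eval v st] distributes the letters of [v] among [d] slots in all
   possible ways, multiplies each slot by the [ad_block]s of its letters and
   pairs slot [t] with [dual_coord (th t)].  This is the action of [U(g)] on the
   [d]-fold tensor power of [End (g (+) CC)], hence it kills the ideal. *)
Fixpoint slot_eval (v : word) (st : state) : CC :=
  if v is a :: v' then \sum_s slot_eval v' (set_slot st s (ad_block a *m st s))
  else \prod_t dual_coord (th t) (st t).

Fixpoint slot_seqs (n : nat) : seq (seq 'I_d) :=
  if n is n'.+1 then [seq s :: al | s <- enum 'I_d, al <- slot_seqs n'] else [:: [::]].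

Fixpoint slot_prod (t : 'I_d) (v : word) (al : seq 'I_d) : mx :=
  match v, al with
  | a :: v', s :: al' => slot_prod t v' al' *m (if s == t then ad_block a else 1%:M)
  | _, _ => 1%:M
  end.

Lemma eq_slot_eval v st st' : st =1 st' -> slot_eval v st = slot_eval v st'.
Proof.
elim: v st st' => [|a v IH] st st' E /=; first by apply: eq_bigr => t _; rewrite E.
by apply: eq_bigr => s _; apply: IH => t; rewrite /set_slot !E.
Qed.

Lemma set_slotC st (s t : 'I_d) M N : s != t ->
  set_slot (set_slot st s M) t N =1 set_slot (set_slot st t N) s M.
Proof.
move=> st' q; rewrite /set_slot.
case: (eqVneq q t) => [->|_]; last by case: (q == s).
by rewrite ifN_eqC.
Qed.

Lemma slot_evalE v st : slot_eval v st =
  \sum_(al <- slot_seqs (size v)) \prod_t dual_coord (th t) (slot_prod t v al *m st t).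
Proof.
elim: v st => [|a v IH] st.
  by rewrite /= big_seq1; apply: eq_bigr => t _; rewrite mul1mx.
rewrite /= big_allpairs_dep sum_enum_ord; apply: eq_bigr => s _; rewrite IH.
apply: eq_bigr => al _; apply: eq_bigr => t _; rewrite /set_slot -mulmxA.
by case: (eqVneq t s) => [->|ts]; rewrite ?eqxx ?mul1mx // eq_sym (negbTE ts) mul1mx.
Qed.

Lemma slot_eval_set_slot_linear v st s r M N :
  slot_eval v (set_slot st s (r *: M + N)) =
  r * slot_eval v (set_slot st s M) + slot_eval v (set_slot st s N).
Proof.
rewrite !slot_evalE mulr_sumr -big_split; apply: eq_bigr => al _ /=.
set f := fun t M' => dual_coord (th t) (slot_prod t v al *m M').
have split_s M' : \prod_t f t (set_slot st s M' t) =
    f s M' * \prod_(t | t != s) f t (st t).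
  rewrite (bigD1 s) //= /set_slot eqxx; congr (_ * _).
  by apply: eq_bigr => t /negbTE ->.
by rewrite !split_s /f mulmxDr -scalemxAr dual_coordD dual_coordZ mulrDl mulrA.
Qed.

Lemma slot_eval_set_slot_sum v st s (I : Type) (r : seq I) f (M : I -> mx) :
  slot_eval v (set_slot st s (\sum_(k <- r) f k *: M k)) =
  \sum_(k <- r) f k * slot_eval v (set_slot st s (M k)).
Proof.
elim: r => [|k r IH]; last by rewrite !big_cons slot_eval_set_slot_linear IH.
have := slot_eval_set_slot_linear v st s 1 0 0.
rewrite !big_nil scale1r addr0 mul1r => e.
by apply: (addrI (slot_eval v (set_slot st s 0))); rewrite addr0 -e.
Qed.

Lemma slot_eval_cons2 i j b st : slot_eval (i :: j :: b) st =
  \sum_s slot_eval b (set_slot st s (ad_block j *m ad_block i *m st s))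
  + \sum_s \sum_(t | t != s)
      slot_eval b (set_slot (set_slot st s (ad_block i *m st s)) t (ad_block j *m st t)).
Proof.
rewrite /= -big_split; apply: eq_bigr => s _; rewrite (bigD1 s) //=; congr (_ + _).
  by apply: eq_slot_eval => t; rewrite /set_slot eqxx; case: (t == s); rewrite ?mulmxA.
by apply: eq_bigr => t ts; apply: eq_slot_eval => q; rewrite /set_slot (negbTE ts).
Qed.

Lemma slot_eval_tgen_nil i j b st :
  slot_eval (i :: j :: b) st - slot_eval (j :: i :: b) st
  - \sum_(k <- enum 'I_m) c i j k * slot_eval (k :: b) st = 0.
Proof.
set W := fun s t => set_slot (set_slot st s (ad_block i *m st s)) t (ad_block j *m st t).
have swapped : \sum_s \sum_(t | t != s)
    slot_eval b (set_slot (set_slot st s (ad_block j *m st s)) t (ad_block i *m st t))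
    = \sum_s \sum_(t | t != s) slot_eval b (W s t).
  transitivity (\sum_s \sum_(t | t != s) slot_eval b (W t s)).
    apply: eq_bigr => s _; apply: eq_bigr => t ts.
    by apply: eq_slot_eval; apply: set_slotC; rewrite eq_sym.
  rewrite (exchange_big_dep xpredT) //=; apply: eq_bigr => s _.
  by apply: eq_bigl => t; rewrite eq_sym.
have bracket s : ad_block j *m ad_block i *m st s =
    1 *: (ad_block i *m ad_block j *m st s)
    + \sum_(k <- enum 'I_m) c i j k *: (ad_block k *m st s).
  move/eqP: (ad_block_lie i j); rewrite subr_eq => /eqP ->.
  rewrite scale1r mulmxDl addrC mulmx_suml; congr (_ + _).
  by apply: eq_bigr => k _; rewrite scalemxAl.
rewrite !slot_eval_cons2 swapped.
have bracket_sum : \sum_s slot_eval b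
    (set_slot st s (\sum_(k <- enum 'I_m) c i j k *: (ad_block k *m st s))) =
    \sum_(k <- enum 'I_m) c i j k * slot_eval (k :: b) st.
  under eq_bigr => s _ do rewrite slot_eval_set_slot_sum.
  by rewrite exchange_big; apply: eq_bigr => k _; rewrite mulr_sumr.
under eq_bigr => s _ do rewrite bracket slot_eval_set_slot_linear mul1r.
rewrite big_split /= bracket_sum.
ring.
Qed.

Lemma slot_eval_tgen a i j b st :
  tlin (slot_eval ^~ st) (tgen c a i j b) = 0.
Proof.
rewrite tlin_tgen; elim: a st => [|x a IH] st; first exact: slot_eval_tgen_nil.
rewrite /= -!sumrB; under eq_bigr do rewrite mulr_sumr.
by rewrite exchange_big -sumrB big1 // => s _; rewrite -(IH (set_slot st s _)).
Qed.

Lemma size_slot_seqs n al : al \in slot_seqs n -> size al = n.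
Proof.
elim: n al => [|n IH] al /=; first by rewrite inE => /eqP ->.
by case/allpairsP => [[s al'] [_ /IH /= <- ->]].
Qed.

Lemma mem_slot_seqs al : al \in slot_seqs (size al).
Proof.
elim: al => [|s al IH] /=; first by rewrite inE.
by apply: (allpairs_f (fun s al => s :: al)); rewrite ?mem_enum.
Qed.

Lemma slot_prod_notin t v al : t \notin al -> slot_prod t v al = 1%:M.
Proof.
elim: al v => [|s al IH] [|a v] //=; rewrite inE negb_or => /andP[ts tal].
by rewrite IH // eq_sym (negbTE ts) mulmx1.
Qed.

Lemma slot_prod_uniq t v al : uniq al -> t \in al -> size al = size v ->
  slot_prod t v al = ad_block (nth x0 v (index t al)).
Proof.
elim: al v => [|s al IH] [|a v] //= /andP[sal ual]; rewrite inE => tal [sz].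
have [<-|ts] := eqVneq s t; first by rewrite slot_prod_notin // mul1mx.
by rewrite mulmx1 IH //; move: tal; rewrite eq_sym (negbTE ts).
Qed.

Lemma covering_slots_uniq (al : seq 'I_d) :
  (forall t, t \in al) -> (size al <= d)%N -> uniq al /\ size al = d.
Proof.
move=> cov ald; have sub : {subset enum 'I_d <= al} by move=> t _; apply: cov.
have ald' : (size al <= size (enum 'I_d))%N by rewrite size_enum_ord.
split; first exact: leq_size_uniq (enum_uniq _) sub ald'.
by rewrite -(uniq_min_size (enum_uniq _) sub ald').1 size_enum_ord.
Qed.

Lemma uniq_slots_covering (al : seq 'I_d) : uniq al -> size al = d -> forall t, t \in al.
Proof.
move=> ual ald t; have sub : {subset al <= enum 'I_d} by move=> q _; rewrite mem_enum.
have dal : (size (enum 'I_d) <= size al)%N by rewrite size_enum_ord ald.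
by rewrite ((uniq_min_size ual sub dal).2 t) mem_enum.
Qed.

Lemma prod_nth_index (al : seq 'I_d) (v : word) : uniq al -> size al = d -> size v = d ->
  \prod_t ((nth x0 v (index t al) == th t)%:R : CC) = (v == map th al)%:R.
Proof.
move=> ual ald vd; have cov := uniq_slots_covering ual ald.
have [->|ne] := eqVneq v (map th al).
  rewrite big1 // => t _.
  by rewrite (nth_map t) ?index_mem ?cov // nth_index ?cov // eqxx.
suff [t nt] : exists t, nth x0 v (index t al) != th t.
  by rewrite (bigD1 t) //= (negbTE nt) mul0r.
apply/existsP; apply: contraR ne => /existsPn same.
apply/eqP/(@eq_from_nth _ x0) => [|i]; first by rewrite size_map ald.
rewrite vd => id; rewrite (nth_map (Ordinal id)) ?ald //.
have := same (nth (Ordinal id) al i).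
by rewrite negbK (index_uniq (Ordinal id)) ?ald // => /eqP.
Qed.

Lemma slot_eval_one v : (size v <= d)%N ->
  slot_eval v (fun _ => 1%:M) = \sum_(al <- slot_seqs d) (uniq al && (v == map th al))%:R.
Proof.
move=> vd; rewrite slot_evalE.
have term0 al t : t \notin al ->
    \prod_t dual_coord (th t) (slot_prod t v al *m 1%:M) = 0.
  by move=> tal; rewrite (bigD1 t) //= mulmx1 slot_prod_notin // dual_coord1 mul0r.
have [vltd|dv] := ltnP (size v) d.
  rewrite [RHS]big1_seq => [|al /andP[_ al_in]]; last first.
    case: eqP => [vE|]; last by rewrite andbF.
    by move: vltd; rewrite vE size_map (size_slot_seqs al_in) ltnn.
  rewrite big1_seq // => al /andP[_ al_in].
  case: (pickP (fun t => t \notin al)) => [t /term0 //|cov].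
  have ald := size_slot_seqs al_in.
  have [_] := covering_slots_uniq (fun t => negbFE (cov t)) (leq_trans (eq_leq ald) vd).
  by rewrite ald => vE; move: vltd; rewrite vE ltnn.
have {vd dv} vd : size v = d by apply/eqP; rewrite eqn_leq vd dv.
rewrite vd; apply: eq_big_seq => al al_in; have ald := size_slot_seqs al_in.
case: (pickP (fun t => t \notin al)) => [t tal|cov].
  rewrite (term0 _ t) //; case: (boolP (uniq al)) => // ual.
  by move: tal; rewrite uniq_slots_covering.
have cov' t : t \in al by apply: negbFE (cov t).
have [ual _] := covering_slots_uniq cov' (eq_leq ald).
rewrite ual -prod_nth_index //; apply: eq_bigr => t _.
by rewrite mulmx1 slot_prod_uniq ?ald ?vd // dual_coord_ad_block.
Qed.

Lemma tlin_slot_eval_symmetric y : symmetric_tensor y ->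
  (forall w, (d < size w)%N -> tcoef y w = 0) ->
  tlin (slot_eval ^~ (fun _ => 1%:M)) y =
  (\sum_(al <- slot_seqs d) (uniq al)%:R) * tcoef y (map th (enum 'I_d)).
Proof.
move=> symy long0.
rewrite (@eq_tlin_tcoef _ _
  (fun v => \sum_(al <- slot_seqs d) (uniq al && (v == map th al))%:R)); last first.
  move=> w; have [dw|wd] := ltnP d (size w); first by rewrite long0 // !mul0r.
  by rewrite slot_eval_one.
rewrite tlinf_sum mulr_suml; apply: eq_big_seq => al al_in.
have [ual|_] := boolP (uniq al); last by rewrite tlinf0 mul0r.
rewrite -tcoef_tlin mul1r; apply: symy; apply: perm_map.
have cov := uniq_slots_covering ual (size_slot_seqs al_in).
by apply: uniq_perm ual (enum_uniq _) _ => t; rewrite mem_enum cov.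
Qed.

End Slots.

(* A PBW-type fact: the symmetric tensors meet the ideal trivially.  By
   downward induction on the length of [w], [tcoef y w] is read off the
   functional [slot_eval] for the letters of [w], which kills the ideal. *)
Theorem symmetric_in_ideal_tcoef0 (y : tensor) :
  symmetric_tensor y -> in_ideal c y -> forall w, tcoef y w = 0.
Proof.
move=> symy yI.
have [N longN] : exists N, forall w, (N <= size w)%N -> tcoef y w = 0.
  exists (\max_(p <- y) size p.2).+1 => w wN.
  rewrite /tcoef big1_seq // => p /andP[/eqP pw py].
  by move: wN; rewrite -pw ltnNge (@leq_bigmax_seq _ y xpredT (fun p => size p.2) p py).
suff below k w : (N <= size w + k)%N -> tcoef y w = 0.
  by move=> w; apply: (below N); rewrite leq_addl.
elim: k w => [|k IH] w wk; first by apply: longN; rewrite addn0 in wk.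
have [|wk'] := leqP N (size w + k); first exact: IH.
pose th (t : 'I_(size w)) := nth x0 w t.
have th_w : map th (enum 'I_(size w)) = w.
  by rewrite -[RHS](mkseq_nth x0) /mkseq -val_enum_ord -map_comp.
have longer w' : (size w < size w')%N -> tcoef y w' = 0 by move=> ww'; apply: IH; lia.
have := tlin_slot_eval_symmetric th symy longer.
rewrite th_w (tlin_in_ideal _ yI) => [/esym/eqP|a i j b]; last exact: slot_eval_tgen.
rewrite mulf_eq0 => /orP[|/eqP //].
have := mem_slot_seqs (enum 'I_(size w)); rewrite size_enum_ord => enum_in.
rewrite psumr_eq0 => [/allP/(_ _ enum_in)|al _]; first by rewrite enum_uniq pnatr_eq0.
exact: ler0n.
Qed.

End SymmetricPBW.

Section Equivariance.
Variable m : nat.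
Variable c : 'I_m -> 'I_m -> 'I_m -> CC.
Hypothesis lieL : is_lie_algebra c.
Variable dual : 'I_m -> 'rV[CC]_m.
Hypothesis dualP : forall i j : 'I_m, killing c (bvec i) (dual j) = (i == j)%:R.
Variable n : nat.
Variable pi : 'I_m -> 'M[CC]_n.
Hypothesis pi_rep : is_rep c pi.

Lemma killing_dual y j : killing c y (dual j) = y 0 j.
Proof.
rewrite (killing_bvecl c) (bigD1 j) //= dualP eqxx mulr1 big1 ?addr0 // => i ij.
by rewrite dualP (negbTE ij) mulr0.
Qed.

Lemma killing_nondegenerate y : (forall k, killing c (bvec k) y = 0) -> y = 0.
Proof.
move=> y0; pose K := \matrix_(k, l) killing c (bvec k) (bvec l).
pose D := \matrix_(j, l) dual j 0 l.
have KD : K *m D^T = 1%:M.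
  apply/matrixP => i j; rewrite !mxE -dualP [RHS](killing_bvecr c).
  by apply: eq_bigr => l _; rewrite !mxE mulrC.
have Ky : K *m y^T = 0.
  apply/matrixP => k q; rewrite !mxE.
  transitivity (killing c (bvec k) y); last exact: y0.
  rewrite (killing_bvecr c).
  by apply: eq_bigr => l _; rewrite !mxE (ord1 q) mulrC.
by apply: trmx_inj; rewrite trmx0 -[y^T]mul1mx -(mulmx1C KD) -mulmxA Ky mulmx0.
Qed.

Lemma lie_dual u j : lie c u (dual j) = - \sum_i lie c u (bvec i) 0 j *: dual i.
Proof.
apply/eqP; rewrite -subr_eq0 opprK; apply/eqP; apply: killing_nondegenerate => k.
rewrite killingDr killing_sumr (bigD1 k) //= killingZr dualP eqxx mulr1.
rewrite big1 => [|i ik]; last by rewrite killingZr dualP eq_sym (negbTE ik) mulr0.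
by rewrite addr0 addrC -killing_dual; exact: killing_lie_invariant.
Qed.

Lemma pivE v a b : piv pi v a b = \sum_l v 0 l * pi l a b.
Proof. by rewrite summxE; apply: eq_bigr => l _; rewrite mxE. Qed.

Lemma piv_lie u v : piv pi u *m piv pi v - piv pi v *m piv pi u = piv pi (lie c u v).
Proof.
have pivM x y : piv pi x *m piv pi y =
    \sum_i \sum_j (x 0 i * y 0 j) *: (pi i *m pi j).
  rewrite mulmx_suml; apply: eq_bigr => i _.
  rewrite -scalemxAl mulmx_sumr scaler_sumr; apply: eq_bigr => j _.
  by rewrite -scalemxAr scalerA.
rewrite !pivM [X in _ - X]exchange_big -sumrB.
transitivity (\sum_i \sum_j (u 0 i * v 0 j) *: piv pi (lie c (bvec i) (bvec j))).
  apply: eq_bigr => i _; rewrite -sumrB; apply: eq_bigr => j _.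
  by rewrite -pi_rep scalerBr mulrC.
have -> : piv pi (lie c u v) = \sum_i \sum_j \sum_k (u 0 i * v 0 j * c i j k) *: pi k.
  rewrite /piv; under eq_bigr do rewrite lieE scaler_suml.
  rewrite exchange_big; apply: eq_bigr => i _.
  under eq_bigr do rewrite scaler_suml.
  by rewrite exchange_big.
apply: eq_bigr => i _; apply: eq_bigr => j _; rewrite /piv scaler_sumr.
by apply: eq_bigr => k _; rewrite lie_bvec scalerA.
Qed.

Lemma piv_lie_dual u i a b :
  piv pi (lie c u (dual i)) a b = - \sum_k lie c u (bvec k) 0 i * piv pi (dual k) a b.
Proof.
rewrite pivE lie_dual; under eq_bigr => l _ do rewrite mxE summxE mulNr mulr_suml.
rewrite sumrN exchange_big; congr (- _); apply: eq_bigr => k _.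
by rewrite pivE mulr_sumr; apply: eq_bigr => l _; rewrite mxE mulrA.
Qed.

(* The Casimir tensor [sum_i x_i^* (x) x_i] is [ad]-invariant, here read
   through [pi] in the first factor and a linear form [S] in the second. *)
Lemma piv_casimir_invariant u a b (S : 'rV[CC]_m -> CC) :
  (forall x, S x = \sum_j x 0 j * S (bvec j)) ->
  \sum_i piv pi (lie c u (dual i)) a b * S (bvec i) +
  \sum_i piv pi (dual i) a b * S (lie c u (bvec i)) = 0.
Proof.
move=> S_lin; under [X in _ + X]eq_bigr do rewrite S_lin mulr_sumr.
rewrite [X in _ + X]exchange_big -big_split big1 //= => i _.
rewrite piv_lie_dual mulNr mulr_suml addrC; apply/eqP; rewrite subr_eq0; apply/eqP.
by apply: eq_bigr => k _; ring.
Qed.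

Lemma tlin_Mz F z a b : tlin F (Mz c pi dual z a b) =
  \sum_i piv pi (dual i) a b * tlin F (subst_op c (bvec i) z).
Proof.
rewrite tlin_flatten big_map sum_enum_ord.
by apply: eq_bigr => i _; rewrite tlin_tscale.
Qed.

Lemma tlin_tder_Mz F u z a b : (forall w, tcoef (tder c u z) w = 0) ->
  tlin F (tder c u (Mz c pi dual z a b)) =
  \sum_i piv pi (dual i) a b * tlin F (subst_op c (lie c u (bvec i)) z).
Proof.
move=> Dz0; rewrite /tder tlin_tbind tlin_Mz; apply: eq_bigr => i _.
by rewrite -(tlin_tbind F (der_word c u)) (tlin_tder_subst_op lieL).
Qed.

Lemma tlin_endten_act_Mz F u z a b :
  tlin F (endten_act pi u (Mz c pi dual z) a b) =
  \sum_i piv pi (lie c u (dual i)) a b * tlin F (subst_op c (bvec i) z)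
  + tlin F (tad u (Mz c pi dual z a b)).
Proof.
rewrite tlin_cat; congr (_ + _); rewrite tlin_flatten big_map sum_enum_ord.
under eq_bigr do rewrite tlin_cat !tlin_tscale !tlin_Mz mulN1r !mulr_sumr -sumrB.
rewrite exchange_big; apply: eq_bigr => i _.
by rewrite -piv_lie !mxE -sumrB mulr_suml; apply: eq_bigr => e _; ring.
Qed.

End Equivariance.

Theorem proposition3p12
  (m : nat) (c : 'I_m -> 'I_m -> 'I_m -> CC)
  (Hsimple : simple_lie c)
  (dual : 'I_m -> 'rV[CC]_m)
  (Hdual : forall i j : 'I_m, killing c (bvec i) (dual j) = (i == j)%:R)
  (n : nat) (pi : 'I_m -> 'M[CC]_n)
  (Hrep : is_rep c pi) (Hirr : irreducible_rep pi)
  (z : tensor m)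
  (Hzsym : symmetric_tensor z) (Hzc : central c z) :
  in_R c pi (Mz c pi dual z).
Proof.
have [lieL [[p [q pq]] _]] := Hsimple.
have [x0 _] : exists k : 'I_m, lie c p q 0 k != 0.
  apply/existsP; apply: contraR pq => /existsPn pq0.
  by apply/eqP/rowP => k; rewrite [RHS]mxE; apply/eqP/negbNE/pq0.
move=> u a b.
have tder_z0 : forall w, tcoef (tder c u z) w = 0.
  apply: (symmetric_in_ideal_tcoef0 lieL Hdual x0).
    exact: symmetric_tder.
  exact: in_ideal_tder.
pose gap := tad u (Mz c pi dual z a b) ++ tscale (-1) (tder c u (Mz c pi dual z a b)).
apply: (@in_ideal_teq _ _ _ ((endten_act pi u (Mz c pi dual z) a b ++ tscale (-1) gap) ++ gap)).
  by apply: teq_tlin => F; rewrite !(tlin_cat, tlin_tscale); ring.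
apply: in_ideal_cat; last exact: in_ideal_tad_tder.
apply: in_ideal0 => w; rewrite tcoef_tlin; set F := fun v => _.
rewrite tlin_cat (tlin_endten_act_Mz dual Hrep) /gap !(tlin_cat, tlin_tscale) tlin_tder_Mz //.
rewrite -[RHS](piv_casimir_invariant lieL Hdual pi u a b
  (S := fun x => tlin F (subst_op c x z))) => [|x]; last exact: tlin_subst_op.
ring.
Qed.
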